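(* Let $\mathcal{N}$ be a Beeping Network with $n$ nodes and maximum degree $\Delta$, where each node has a unique ID from $[1,n^c]$ for a constant $c\ge 1$ and each node knows $n$ and the parameter $c$. Then there is a deterministic distributed algorithm that solves the Learning Neighborhood problem on $\mathcal{N}$ in $O(\Delta^2\log^2 n)$ beeping rounds.
   Context: A Beeping Network is a network of $n$ nodes whose topology is an undirected graph $G=(V,E)$; $N(v)$ denotes the set of neighbors of $v$. Time is divided into synchronous rounds and all nodes start simultaneously. In each round every node either beeps or listens; a listening node hears ''silence'' if no neighbor beeps and ''noise'' if at least one neighbor beeps, and cannot distinguish one beep from several. Complexity is measured in rounds. Learning Neighborhood: the problem is solved once every node $v$ knows the ID of every node $u\in N(v)$. *)

From mathcomp Require Import all_boot.
Set Implicit Arguments. Unset Strict Implicit. Unset Printing Implicit Defensive.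

(* A deterministic beeping algorithm, parameterised by the knowledge every node
   has: the network size n and its own ID (the constant c is fixed beforehand,
   so the algorithm may depend on it).  A node's local history is the sequence
   of bits it has heard in the completed rounds (true = "noise").
   - [act n i h]  : does node with ID i beep in the next round, given history h?
   - [out n i h]  : the node's (final) output after history h, None = not yet
                    terminated; Some s = terminates outputting the ID list s. *)
Record beep_alg := BeepAlg {
  act : nat -> nat -> seq bool -> bool;
  out : nat -> nat -> seq bool -> option (seq nat)
}.

Section Exec.
Variables (A : beep_alg) (n : nat) (e : rel 'I_n) (id : 'I_n -> nat).

(* Histories after t synchronous rounds.  A beeping node does not listen
   (records false); a listening node hears noise iff some neighbour beeps. *)
Fixpoint hist (t : nat) : 'I_n -> seq bool :=
  match t with
  | 0 => fun _ => [::]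
  | t'.+1 => fun v =>
      let h := hist t' in
      rcons (h v)
        (~~ act A n (id v) (h v) &&
         [exists u, e v u && act A n (id u) (h u)])
  end.

Definition outputs_at (v : 'I_n) (t : nat) (s : seq nat) : Prop :=
  out A n (id v) (hist t v) = Some s /\
  forall t', t' < t -> out A n (id v) (hist t' v) = None.

Definition knows_neighborhood (v : 'I_n) (s : seq nat) : Prop :=
  forall x, x \in s <-> exists u, e v u /\ id u = x.

Definition learns_within (v : 'I_n) (T : nat) : Prop :=
  exists t s, t <= T /\ outputs_at v t s /\ knows_neighborhood v s.
End Exec.

Definition max_deg (n : nat) (e : rel 'I_n) : nat :=
  \max_(v : 'I_n) #|[set u | e v u]|.

From mathcomp Require Import all_boot ssralg poly finalg finfield zify.
Set Implicit Arguments. Unset Strict Implicit. Unset Printing Implicit Defensive.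
Import GRing.Theory.

(* IDs are encoded as Reed-Solomon codewords: polynomials with D = c (log n + 1)
   coefficients over a field F of characteristic 2, so two distinct codewords
   agree on at most D - 1 points.  A slot is a pair (a, b) in F * F, and the node
   with ID x beeps in slot (a, b) iff its codeword takes the value b at a.  Once
   |F| > (deg v + 1)(D - 1), every ID x outside v and its neighbours has a point a
   separating its codeword from all of theirs, and in slot (a, p_x(a)) node v
   listens and hears silence.  So the IDs x <> v such that v heard noise in every
   slot where x beeped and v did not are exactly the IDs of v's neighbours.
   Since the degree is unknown, phase k uses |F| ~ 2^k D, and v stops after the
   first phase leaving at most 2^k candidates: neighbours are always candidates,
   so then deg v <= 2^k and the candidates are exact.  The phases up to 2^k ~ Delta
   take O((Delta D)^2) = O(Delta^2 log^2 n) rounds. *)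

Section PolynomialCode.
Variables (F : finFieldType) (D : nat).

Lemma card_poly_agree (p q : {poly F}) :
  size p <= D -> size q <= D -> p != q ->
  #|[set a | q.[a] == p.[a]]%R| <= D.-1.
Proof.
move=> Dp Dq neq_pq; have pq_neq0 : (p - q != 0)%R by rewrite subr_eq0.
have roots_pq : all (root (p - q)) (enum [set a | q.[a] == p.[a]]%R).
  by apply/allP => a; rewrite mem_enum inE rootE !hornerE => /eqP ->; rewrite subrr.
have := max_poly_roots pq_neq0 roots_pq (enum_uniq _); rewrite -cardE => lt_card.
have Dpq : size (p - q)%R <= D.
  by apply: leq_trans (size_polyD p (- q)) _; rewrite size_polyN geq_max Dp Dq.
by rewrite -ltnS (leq_trans lt_card) // (leq_trans Dpq) // leqSpred.
Qed.

Lemma exists_separating_point (p : {poly F}) (qs : seq {poly F}) :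
  size p <= D -> all (fun q : {poly F} => size q <= D) qs -> p \notin qs ->
  size qs * D.-1 < #|F| ->
  exists a, all (fun q => q.[a] != p.[a])%R qs.
Proof.
move=> Dp Dqs p_qs small_qs.
set A := [set a | has (fun q => q.[a] == p.[a])%R qs].
have card_A : #|A| <= size qs * D.-1.
  rewrite {}/A; elim: qs Dqs p_qs {small_qs} => [|q qs IHqs] Dqs p_qs.
    by rewrite leqn0 cards_eq0; apply/eqP/setP => a; rewrite !inE.
  case/andP: Dqs => Dq Dqs; rewrite inE negb_or in p_qs; case/andP: p_qs => neq_pq p_qs.
  have -> : [set a | has (fun q => q.[a] == p.[a])%R (q :: qs)]
          = [set a | q.[a] == p.[a]]%R :|: [set a | has (fun q => q.[a] == p.[a])%R qs].
    by apply/setP => a; rewrite !inE.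
  rewrite (leq_trans (leq_card_setU _ _)) //= mulSn leq_add //.
  - exact: card_poly_agree.
  - exact: IHqs.
have [a] : exists a, a \in ~: A.
  apply/card_gt0P; rewrite -(cardsC A) in small_qs.
  by rewrite -(ltn_add2l #|A|) addn0 (leq_ltn_trans card_A).
by rewrite !inE -all_predC; exists a.
Qed.

Definition codeword (x : nat) : {poly F} :=
  Poly (nth [tuple of nseq D 0%R] (enum {: D.-tuple F}) x).

Lemma size_codeword x : size (codeword x) <= D.
Proof. exact: leq_trans (size_Poly _) (eq_leq (size_tuple _)). Qed.

Lemma codeword_inj x y : x < #|F| ^ D -> y < #|F| ^ D ->
  codeword x = codeword y -> x = y.
Proof.
rewrite -card_tuple cardE => ltx lty eq_xy; apply/eqP.
rewrite -(nth_uniq [tuple of nseq D 0%R] ltx lty (enum_uniq _)); apply/eqP/val_inj.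
apply: (@eq_from_nth _ 0%R) => [|i _].
  exact: etrans (size_tuple _) (esym (size_tuple _)).
by have := congr1 (fun p : {poly F} => p`_i)%R eq_xy; rewrite /= !coef_Poly.
Qed.

Definition slot (r : nat) : F * F := nth (0, 0)%R (enum {: F * F}) r.

Definition beeps_at (x r : nat) : bool := ((codeword x).[(slot r).1] == (slot r).2)%R.

Lemma exists_private_slot (x : nat) (W : seq nat) :
  x < #|F| ^ D -> {in W, forall w, w < #|F| ^ D} -> x \notin W ->
  size W * D.-1 < #|F| ->
  exists2 r, r < #|F| ^ 2 & beeps_at x r && all (fun w => ~~ beeps_at w r) W.
Proof.
move=> ltx ltW x_W small_W.
have sizes_W : all (fun q : {poly F} => size q <= D) (map codeword W).
  by rewrite all_map; apply/allP => w _; apply: size_codeword.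
have x_codes_W : codeword x \notin map codeword W.
  apply/mapP => -[w w_W /(codeword_inj ltx (ltW w w_W)) eq_xw].
  by move: x_W; rewrite eq_xw w_W.
have small_codes_W : size (map codeword W) * D.-1 < #|F| by rewrite size_map.
have [a sep_a] :=
  exists_separating_point (size_codeword x) sizes_W x_codes_W small_codes_W.
have slot_a : (a, (codeword x).[a])%R \in enum {: F * F} by rewrite mem_enum.
exists (index (a, (codeword x).[a])%R (enum {: F * F})).
  by rewrite -mulnn -card_prod cardE index_mem.
rewrite /beeps_at /slot nth_index //= eqxx; rewrite all_map in sep_a.
by apply: sub_all sep_a => w.
Qed.

End PolynomialCode.

Definition gf (m : nat) : finFieldType :=
  s2val (@pPrimePowerField 2 m.+1 isT (ltn0Sn m)).

Lemma card_gf m : #|gf m| = 2 ^ m.+1.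
Proof. exact: (s2valP' (@pPrimePowerField 2 m.+1 isT (ltn0Sn m))). Qed.

Section Histories.
Variables (A : beep_alg) (n : nat) (e : rel 'I_n) (id : 'I_n -> nat).

Lemma size_hist t v : size (hist A e id t v) = t.
Proof. by elim: t v => [|t IHt] v //=; rewrite size_rcons IHt. Qed.

Lemma nth_hist T t v : t < T ->
  nth false (hist A e id T v) t =
  ~~ act A n (id v) (hist A e id t v) &&
  [exists u, e v u && act A n (id u) (hist A e id t u)].
Proof.
elim: T v => [|T IHT] v //=; rewrite ltnS leq_eqVlt nth_rcons size_hist.
by case/orP=> [/eqP ->|lt_tT]; rewrite ?ltnn ?eqxx // lt_tT IHT.
Qed.

End Histories.

Section Algorithm.
Variable c : nat.

Definition code_len (n : nat) : nat := c * (trunc_log 2 n).+1.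

Definition phase_field (n k : nat) : finFieldType :=
  gf (k + (trunc_log 2 (code_len n)).+1).

Definition phase_len (n k : nat) : nat := #|phase_field n k| ^ 2.

Definition phase_start (n k : nat) : nat := \sum_(j < k) phase_len n j.

Definition beeps (n k x r : nat) : bool := beeps_at (phase_field n k) (code_len n) x r.

Definition schedule (n x t : nat) : bool :=
  [exists k : 'I_t.+1, (phase_start n k <= t < phase_start n k.+1) &&
                       beeps n k x (t - phase_start n k)].

Definition candidates (n k i : nat) (heard : nat -> bool) : seq nat :=
  [seq x <- iota 1 (n ^ c) | (x != i) &&
     all (fun r => beeps n k x r && ~~ beeps n k i r ==> heard (phase_start n k + r))
         (iota 0 (phase_len n k))].

Definition phase_done (n k i : nat) (h : seq bool) : bool :=
  (phase_start n k.+1 <= size h) && (size (candidates n k i (nth false h)) <= 2 ^ k).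

Definition learn_alg : beep_alg :=
  BeepAlg (fun n i h => schedule n i (size h))
    (fun n i h => let done k := phase_done n k i h in
       if has done (iota 0 (size h))
       then Some (candidates n (find done (iota 0 (size h))) i (nth false h))
       else None).

Lemma card_phase_field n k :
  #|phase_field n k| = 2 ^ k * 2 ^ (trunc_log 2 (code_len n)).+2.
Proof. by rewrite card_gf -addnS expnD. Qed.

Lemma phase_startS n k : phase_start n k.+1 = phase_start n k + phase_len n k.
Proof. by rewrite /phase_start big_ord_recr. Qed.

Lemma phase_len_gt0 n k : 0 < phase_len n k.
Proof. by rewrite /phase_len expn_gt0 card_phase_field muln_gt0 !expn_gt0. Qed.

Lemma leq_phase_start n : {homo phase_start n : k l / k <= l}.
Proof.
by apply: homo_leq => [//|k l m|k]; [apply: leq_trans | rewrite phase_startS leq_addr].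
Qed.

Lemma leq_phase_startS n k l : (phase_start n k.+1 <= phase_start n l) = (k < l).
Proof.
apply/idP/idP => [le_start|/leq_phase_start //]; rewrite ltnNge; apply/negP => le_lk.
have := leq_phase_start n le_lk; have := phase_len_gt0 n k.
by rewrite phase_startS in le_start; lia.
Qed.

Lemma phase_start_ge n k : k <= phase_start n k.
Proof. by elim: k => // k IHk; rewrite phase_startS -addn1 leq_add ?phase_len_gt0. Qed.

Lemma schedule_in_phase n x k t : phase_start n k <= t < phase_start n k.+1 ->
  schedule n x t = beeps n k x (t - phase_start n k).
Proof.
case/andP=> ge_t lt_t.
apply/existsP/idP => [[l /andP [/andP [ge_l lt_l] beeps_l]]|beeps_t].
  have eq_lk : nat_of_ord l = k.
    apply/eqP; rewrite eqn_leq leqNgt -(leq_phase_startS n) -ltnNge.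
    rewrite (leq_ltn_trans ge_l lt_t) leqNgt -(leq_phase_startS n) -ltnNge.
    exact: leq_ltn_trans ge_t lt_l.
  by rewrite -eq_lk.
have lt_k : k < t.+1 by rewrite ltnS (leq_trans (phase_start_ge n k)).
by exists (Ordinal lt_k); rewrite ge_t lt_t.
Qed.

Lemma phase_start_leq n k : 0 < c ->
  phase_start n k.+1 <= 32 * (2 ^ k * code_len n) ^ 2.
Proof.
move=> c_gt0; have code_gt0 : 0 < code_len n by rewrite muln_gt0 c_gt0.
have field_le : #|phase_field n k| <= 4 * (2 ^ k * code_len n).
  rewrite card_phase_field !expnS [2 * (2 * _)]mulnA mulnCA !leq_pmul2l ?expn_gt0 //.
  exact: trunc_logP.
have lenS k' : phase_len n k'.+1 = 4 * phase_len n k'.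
  by rewrite /phase_len !card_phase_field [2 ^ k'.+1]expnS -mulnA expnMn.
have startS_le : phase_start n k.+1 <= 2 * phase_len n k.
  elim: k {field_le} => [|k IHk].
    by rewrite phase_startS /phase_start big_ord0 leq_pmull.
  by rewrite phase_startS lenS; move: IHk; lia.
apply: leq_trans startS_le _.
by rewrite /phase_len -[32]/(2 * 4 ^ 2) -mulnA -expnMn leq_pmul2l // leq_sqr.
Qed.

End Algorithm.

Lemma find_iota0 (a : pred nat) m k :
  k < m -> a k -> (forall j, j < k -> ~~ a j) -> find a (iota 0 m) = k.
Proof.
move=> lt_km a_k before_k.
have has_a : has a (iota 0 m) by apply/hasP; exists k; rewrite ?mem_iota.
have lt_find : find a (iota 0 m) < m by rewrite -[m in _ < m](size_iota 0 m) -has_find.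
have := nth_find 0 has_a; rewrite nth_iota // add0n => a_find.
case: (ltngtP (find a (iota 0 m)) k) => // [/before_k|lt_kf]; first by rewrite a_find.
by have := before_find 0 lt_kf; rewrite nth_iota ?add0n ?a_k // (ltn_trans lt_kf).
Qed.

Section Correctness.
Variables (c n : nat) (e : rel 'I_n) (id : 'I_n -> nat).
Hypotheses (c_gt0 : 0 < c) (e_irr : irreflexive e) (id_inj : injective id)
  (id_range : forall v, 1 <= id v <= n ^ c).

Definition heard (v : 'I_n) (t : nat) : bool :=
  ~~ schedule c n (id v) t && [exists u, e v u && schedule c n (id u) t].

Lemma nth_hist_learn T t v : t < T ->
  nth false (hist (learn_alg c) e id T v) t = heard v t.
Proof.
move=> lt_tT; rewrite nth_hist //= /heard size_hist.
by congr andb; apply: eq_existsb => u; rewrite size_hist.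
Qed.

Lemma heard_in_phase k v r : r < phase_len c n k ->
  heard v (phase_start c n k + r) =
  ~~ beeps c n k (id v) r && [exists u, e v u && beeps c n k (id u) r].
Proof.
move=> lt_r.
have in_phase : phase_start c n k <= phase_start c n k + r < phase_start c n k.+1.
  by rewrite leq_addr phase_startS ltn_add2l.
rewrite /heard !(schedule_in_phase _ in_phase) addKn; congr andb.
by apply: eq_existsb => u; rewrite (schedule_in_phase _ in_phase) addKn.
Qed.

Definition nbrs (v : 'I_n) : {set 'I_n} := [set u | e v u].

Definition nbr_ids (v : 'I_n) : seq nat := [seq id u | u <- enum (nbrs v)].

Definition cands (k : nat) (v : 'I_n) : seq nat := candidates c n k (id v) (heard v).

Lemma candidates_hist T k v : phase_start c n k.+1 <= T ->
  candidates c n k (id v) (nth false (hist (learn_alg c) e id T v)) = cands k v.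
Proof.
move=> le_T; apply: eq_filter => x; congr andb; apply: eq_in_all => r.
rewrite mem_iota add0n => lt_r; rewrite nth_hist_learn //.
by apply: leq_trans le_T; rewrite phase_startS ltn_add2l.
Qed.

Lemma nbr_id_cand k v u : e v u -> id u \in cands k v.
Proof.
move=> e_vu; rewrite mem_filter mem_iota; apply/andP; split; last first.
  by have := id_range u; lia.
apply/andP; split.
  by apply: contraTneq e_vu => /id_inj ->; rewrite e_irr.
apply/allP => r; rewrite mem_iota add0n => lt_r; apply/implyP => /andP [beeps_u silent_v].
by rewrite heard_in_phase // silent_v; apply/existsP; exists u; rewrite e_vu.
Qed.

Lemma id_lt_code k x : x <= n ^ c -> x < #|phase_field c n k| ^ code_len c n.
Proof.
move=> le_x; apply: (leq_ltn_trans le_x); apply: (@leq_trans (2 ^ code_len c n)).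
  by rewrite /code_len mulnC expnM ltn_exp2r // trunc_log_ltn.
by rewrite leq_exp2r ?muln_gt0 ?c_gt0 // card_gf -[1]/(2 ^ 0) ltn_exp2l.
Qed.

Lemma nbrs_fit_field k m : m <= 2 ^ k ->
  m.+1 * (code_len c n).-1 < #|phase_field c n k|.
Proof.
move=> le_m; have := trunc_log_ltn (code_len c n) (isT : 1 < 2).
rewrite card_phase_field !expnS; have := expn_gt0 2 k; nia.
Qed.

Lemma cand_nbr_id k v x : #|nbrs v| <= 2 ^ k -> x \in cands k v -> x \in nbr_ids v.
Proof.
move=> deg_v; rewrite mem_filter mem_iota => /andP [/andP [x_v /allP x_ok] range_x].
apply: contraT => x_nbr.
have ids_lt : {in id v :: nbr_ids v, forall w, w < #|phase_field c n k| ^ code_len c n}.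
  have id_le u : id u <= n ^ c by case/andP: (id_range u).
  by move=> w /predU1P [->|/mapP [u _ ->]]; apply/id_lt_code/id_le.
have x_W : x \notin id v :: nbr_ids v by rewrite inE negb_or x_v.
have small_W : size (id v :: nbr_ids v) * (code_len c n).-1 < #|phase_field c n k|.
  by rewrite /= size_map -cardE nbrs_fit_field.
have le_x : x <= n ^ c by move: range_x; lia.
have [r lt_r /andP [beeps_x /= /andP [silent_v silent_nbrs]]] :=
  exists_private_slot (id_lt_code k le_x) ids_lt x_W small_W.
have heard_r : heard v (phase_start c n k + r).
  by apply: (implyP (x_ok r _)); rewrite ?mem_iota // /beeps beeps_x silent_v.
move: heard_r; rewrite heard_in_phase // => /andP [_ /existsP [u /andP [e_vu beeps_u]]].
move/allP: silent_nbrs => /(_ (id u)); rewrite [beeps_at _ _ _ _]beeps_u; apply.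
by apply: map_f; rewrite mem_enum inE.
Qed.

Lemma size_nbr_ids v : size (nbr_ids v) = #|nbrs v|.
Proof. by rewrite size_map -cardE. Qed.

Lemma size_cands_leq k v : (size (cands k v) <= 2 ^ k) = (#|nbrs v| <= 2 ^ k).
Proof.
have sub_nbrs : {subset nbr_ids v <= cands k v}.
  by move=> x /mapP [u]; rewrite mem_enum inE => e_vu ->; apply: nbr_id_cand.
have uniq_nbrs : uniq (nbr_ids v) by rewrite map_inj_uniq ?enum_uniq.
apply/idP/idP => [|deg_v].
  by rewrite -size_nbr_ids; apply/leq_trans/uniq_leq_size.
rewrite (leq_trans _ deg_v) // -size_nbr_ids uniq_leq_size ?filter_uniq ?iota_uniq //.
by move=> x; apply: cand_nbr_id.
Qed.

Lemma cands_knows k v : #|nbrs v| <= 2 ^ k -> knows_neighborhood e id v (cands k v).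
Proof.
move=> deg_v x; split => [/(cand_nbr_id deg_v) /mapP [u]|[u [e_vu <-]]].
  by rewrite mem_enum inE => e_vu ->; exists u.
exact: nbr_id_cand.
Qed.

Lemma learns_within_phase v k :
  #|nbrs v| <= 2 ^ k -> learns_within (learn_alg c) e id v (phase_start c n k.+1).
Proof.
move=> deg_v; have deg_ex : exists j, #|nbrs v| <= 2 ^ j by exists k.
have [kv deg_kv min_kv] := ex_minnP deg_ex.
have done_hist T j : phase_done c n j (id v) (hist (learn_alg c) e id T v) =
                     (phase_start c n j.+1 <= T) && (#|nbrs v| <= 2 ^ j).
  rewrite /phase_done size_hist; case: leqP => //= le_T.
  by rewrite candidates_hist // size_cands_leq.
exists (phase_start c n kv.+1), (cands kv v); split; last split.
- by apply: leq_phase_start; apply: min_kv.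
- split => [|t lt_t] /=; rewrite size_hist.
    have kv_lt_start := phase_start_ge c n kv.+1.
    rewrite (@find_iota0 _ _ kv) ?done_hist ?leqnn ?deg_kv ?candidates_hist //.
      by case: hasP => // -[]; exists kv; rewrite ?mem_iota ?done_hist ?leqnn.
    move=> j lt_j; rewrite done_hist; apply/negP => /andP [_ /min_kv].
    by rewrite leqNgt lt_j.
  case: hasP => // -[j _]; rewrite done_hist => /andP [le_j /min_kv le_kv].
  by have := leq_phase_start c n (le_kv : kv.+1 <= j.+1); lia.
- exact: cands_knows.
Qed.

End Correctness.

Theorem theorem2 (c : nat) (hc : 1 <= c) :
  exists (A : beep_alg) (K : nat),
  forall (n : nat) (e : rel 'I_n) (id : 'I_n -> nat),
    symmetric e -> irreflexive e -> injective id ->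
    (forall v, 1 <= id v <= n ^ c) ->
    exists T : nat,
      T <= K * (max_deg e).+1 ^ 2 * (trunc_log 2 n).+1 ^ 2 /\
      forall v : 'I_n, learns_within A e id v T.
Proof.
exists (learn_alg c), (128 * c ^ 2) => n e id _ e_irr id_inj id_range.
set k := (trunc_log 2 (max_deg e)).+1.
exists (phase_start c n k.+1); split.
  have pow_k : 2 ^ k <= 2 * (max_deg e).+1.
    rewrite expnS leq_pmul2l // (leq_trans (leq_pexp2l _ (leq_trunc_log 2 (leqnSn _)))) //.
    exact: trunc_logP.
  apply: leq_trans (phase_start_leq _ _ hc) _; rewrite /code_len.
  rewrite -leq_sqr in pow_k; move: pow_k; rewrite !expnMn; nia.
move=> v; apply/learns_within_phase/ltnW => //.
apply: leq_ltn_trans (trunc_log_ltn (max_deg e) (isT : 1 < 2)).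
exact: (@leq_bigmax_cond _ predT (fun v => #|[set u | e v u]|) v).
Qed.
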